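(* If $\beta_\varphi>0$ and the limit $\zeta_\varphi=\lim_{r\to\infty}\frac{\log\varphi(r)}{\log\varphi(r^2)}$ exists, then $\alpha_{\varphi,s}=1$.
   Context: Let $R_0>0$. $\varphi:(R_0,\infty)\to(0,\infty)$ is a non-decreasing unbounded function with $\log r\le\varphi(r)\le r$ for $r\ge R_0$; $s:(R_0,\infty)\to(0,\infty)$ is non-decreasing with $r<s(r)\le r^2$ for $r\ge R_0$ and $\liminf_{r\to\infty}s(r)/r>1$. $\alpha_{\varphi,s}=\liminf_{r\to\infty}\frac{\log\varphi(r)}{\log\varphi(s(r))}$, $\beta_\varphi=\limsup_{r\to\infty}\frac{\log\log r}{\log\varphi(r)}$. *)

From HB Require Import structures.
From mathcomp Require Import all_boot all_order all_algebra.
From mathcomp Require Import all_classical all_reals all_analysis.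
Set Implicit Arguments. Unset Strict Implicit. Unset Printing Implicit Defensive.
Import Order.TTheory GRing.Theory Num.Theory.
Import numFieldNormedType.Exports.
Local Open Scope ring_scope.

Definition beta_phi (R : realType) (phi : R -> R) : \bar R :=
  limf_esup (fun r : R => (ln (ln r) / ln (phi r))%:E) +oo%R.

Definition alpha_phi_s (R : realType) (phi s : R -> R) : \bar R :=
  limf_einf (fun r : R => (ln (phi r) / ln (phi (s r)))%:E) +oo%R.

From HB Require Import structures.
From mathcomp Require Import all_boot all_order all_algebra.
From mathcomp Require Import all_classical all_reals all_analysis.
From mathcomp Require Import lra.
Import Order.TTheory GRing.Theory Num.Theory.
Import numFieldNormedType.Exports.
Local Open Scope classical_set_scope.
Local Open Scope ring_scope.

(* Write L := ln o phi and g r := L r / L (r^2).  Since phi is nondecreasing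
   and unbounded, L is eventually positive and nondecreasing, so g <= 1
   eventually and the limit zeta of g satisfies zeta <= 1.
   - If zeta < 1, then eventually L q <= rho * L (q^2) for some rho < 1: each
     squaring multiplies L by at least 1/rho, whereas it only adds ln 2 to
     ln (ln _).  Telescoping along r, sqrt r, r^(1/4), ... shows that
     ln (ln r) = o(L r), hence beta_phi <= 0, contradicting beta_phi > 0.
   - If zeta = 1, then r < s r <= r^2 gives g r <= L r / L (s r) <= 1
     eventually, and squeezing yields alpha_phi_s = 1.
   The file first proves bounds on limf_esup / limf_einf from eventual
   inequalities, then the telescoping estimate and its consequence for
   beta_phi, then the squeezing argument for alpha_phi_s, and finally the
   theorem by case analysis on zeta. *)

Section eventual_bounds.
Context {U : choiceType} {T : filteredType U} {R : realType}
  (F : set_system T) (f : T -> \bar R).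

Lemma limf_esup_le (c : \bar R) :
  (\forall x \near F, (f x <= c)%E) -> (limf_esup f F <= c)%E.
Proof.
move=> Fc; rewrite limf_esupE.
apply: (@le_trans _ _ (ereal_sup (f @` [set x | (f x <= c)%E]))).
  by apply: ereal_inf_lbound; exists [set x | (f x <= c)%E].
by apply: ge_ereal_sup => _ [x fxc <-].
Qed.

Lemma limf_einf_ge (c : \bar R) :
  (\forall x \near F, (c <= f x)%E) -> (c <= limf_einf f F)%E.
Proof.
move=> Fc; rewrite limf_einfE.
apply: (@le_trans _ _ (ereal_inf (f @` [set x | (c <= f x)%E]))).
  by apply: le_ereal_inf_tmp => _ [x cfx <-].
by apply: ereal_sup_ubound; exists [set x | (c <= f x)%E].
Qed.

(* Along a proper filter, an eventual upper bound also bounds the limit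
   inferior, since every element of the filter meets the bounding set. *)
Lemma limf_einf_le {FF : ProperFilter F} (c : \bar R) :
  (\forall x \near F, (f x <= c)%E) -> (limf_einf f F <= c)%E.
Proof.
move=> Fc; rewrite limf_einfE; apply: ge_ereal_sup => _ [V FV <-].
have [x [Vx fxc]] := filter_ex (filterI FV Fc).
by apply: le_trans fxc; apply: ereal_inf_lbound; exists x.
Qed.

End eventual_bounds.

Lemma lnln_sqr (R : realType) (q : R) :
  1 < q -> ln (ln (q ^+ 2)) = ln 2 + ln (ln q).
Proof.
move=> q1; have q0 : 0 < q by lra.
by rewrite lnXn // -(mulr_natl (ln q) 2) lnM ?posrE // ln_gt0.
Qed.

(* Telescoping along the tower r, sqrt r, r^(1/4), ...: if every squaring
   raises e * L by at least ln 2 (the amount by which it raises ln (ln _)),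
   then ln (ln r) - e * L r stays below its bound on the block [B, B^2]. *)
Lemma loglog_sub_bounded {R : realType} {L : R -> R} {B e : R} :
  2 <= B -> 0 < e ->
  (forall x y, B <= x -> x <= y -> L x <= L y) ->
  (forall q, B <= q -> ln 2 + e * L q <= e * L (q ^+ 2)) ->
  forall r, B <= r -> ln (ln r) - e * L r <= ln (ln (B ^+ 2)) - e * L B.
Proof.
move=> B2 e_gt0 L_mono L_sqr.
pose h r := ln (ln r) - e * L r.
pose c0 := ln (ln (B ^+ 2)) - e * L B.
have h_sqr q : B <= q -> h (q ^+ 2) <= h q.
  move=> Bq; have step := L_sqr q Bq.
  by rewrite /h lnln_sqr; lra.
have h_first_block r : B <= r -> r <= B ^+ 2 -> h r <= c0.
  move=> Br rB2; have lnr_gt0 : 0 < ln r by apply: ln_gt0; lra.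
  have lnlnr : ln (ln r) <= ln (ln (B ^+ 2)).
    have lnB2_gt0 : 0 < ln (B ^+ 2) by apply: ln_gt0; nra.
    by rewrite !ler_ln ?posrE //; nra.
  have : e * L B <= e * L r by rewrite ler_pM2l // L_mono.
  rewrite /h /c0; lra.
(* Induction on an integer bound m: a point of (B^2, B^2 + m + 1] has its
   square root in [B, B^2 + m]. *)
have h_block m : forall r, B <= r -> r <= B ^+ 2 + m%:R -> h r <= c0.
  elim: m => [|m IHm] r Br rB.
    by apply: h_first_block; rewrite // -(addr0 (B ^+ 2)).
  have [rB2|B2r] := leP r (B ^+ 2); first exact: h_first_block.
  have r_ge0 : 0 <= r by lra.
  have sqrt_sqr : Num.sqrt r ^+ 2 = r := sqr_sqrtr r_ge0.
  have sqrt_ge0 : 0 <= Num.sqrt r := sqrtr_ge0 r.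
  set q := Num.sqrt r in sqrt_sqr sqrt_ge0 *.
  have Bq : B <= q by rewrite -sqrt_sqr !expr2 in B2r; nra.
  have qB : q <= B ^+ 2 + m%:R.
    by rewrite -sqrt_sqr -natr1 expr2 in rB; rewrite expr2 in rB *; nra.
  by rewrite -sqrt_sqr; apply: le_trans (h_sqr q Bq) (IHm q Bq qB).
move=> r Br; have := h_block (Num.Def.archi_bound r) r Br.
rewrite /h /c0; apply; apply: le_trans (ltW (archi_boundP _)) _; first lra.
have : 0 <= B ^+ 2 by rewrite sqr_ge0.
lra.
Qed.

Lemma loglog_negligible {R : realType} {L : R -> R} {rho : R} :
  rho < 1 ->
  (\forall x \near +oo, forall y, x <= y -> L x <= L y) ->
  (forall M, \forall x \near +oo, M < L x) ->
  (\forall q \near +oo, L q <= rho * L (q ^+ 2)) ->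
  forall eps, 0 < eps -> \forall r \near +oo, ln (ln r) <= eps * L r.
Proof.
move=> rho_lt1 L_mono L_big L_sqr eps eps_gt0.
pose e := eps / 2; have e_gt0 : 0 < e by rewrite divr_gt0.
have rho'_gt0 : 0 < e * (1 - rho) by rewrite mulr_gt0 // subr_gt0.
have [B [_ HB]] : \forall q \near +oo, [/\ 2 <= q,
    (forall y, q <= y -> L q <= L y), ln 2 / (e * (1 - rho)) < L q
    & L q <= rho * L (q ^+ 2)].
  near=> q; split; near: q; [exact: nbhs_pinfty_ge | exact: L_mono
                            | exact: L_big | exact: L_sqr].
pose C := B + 1.
have HC x : C <= x -> _ := fun Cx => HB x (lt_le_trans (ltr_pwDr ltr01 (lexx B)) Cx).
have [C2 _ _ _] := HC C (lexx C).
have C_mono x y : C <= x -> x <= y -> L x <= L y.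
  by move=> /HC[_ L_mono_x _ _]; exact: L_mono_x.
(* Once L q is large, L (q^2) - L q >= (1 - rho) L q exceeds ln 2 / e. *)
have step q : C <= q -> ln 2 + e * L q <= e * L (q ^+ 2).
  move=> Cq; have [q2 L_mono_q Lq_big Lq_sqr] := HC q Cq.
  have Lq_Lq2 : L q <= L (q ^+ 2) by apply: L_mono_q; rewrite expr2; nra.
  rewrite ltr_pdivrMr // in Lq_big.
  have := ler_pM2l e_gt0; nra.
have bounded := loglog_sub_bounded C2 e_gt0 C_mono step.
set K := ln (ln (C ^+ 2)) - e * L C in bounded.
near=> r.
have Cr : C <= r by near: r; apply: nbhs_pinfty_ge; exact: num_real.
have Lr_big : `|K| / e < L r by near: r; exact: L_big.
rewrite ltr_pdivrMr // in Lr_big.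
have eps_2e : eps = 2 * e by rewrite /e mulrC divfK.
have := bounded r Cr; have := ler_norm K; rewrite eps_2e; lra.
Unshelve. all: by end_near.
Qed.

Lemma beta_phi_le0 {R : realType} {phi : R -> R} :
  (\forall r \near +oo, 0 < ln (phi r)) ->
  (forall eps, 0 < eps -> \forall r \near +oo, ln (ln r) <= eps * ln (phi r)) ->
  (beta_phi phi <= 0%:E)%E.
Proof.
move=> L_gt0 loglog_small; apply/lee_addgt0Pr => eps eps_gt0.
rewrite add0e; apply: limf_esup_le; near=> r; rewrite lee_fin.
have Lr_gt0 : 0 < ln (phi r) by near: r.
by rewrite ler_pdivrMr //; near: r; exact: loglog_small.
Unshelve. all: by end_near.
Qed.

Lemma ratio_sqr_le1 (R : realType) (L : R -> R) :
  (\forall r \near +oo, 0 < L r) ->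
  (\forall r \near +oo, forall y, r <= y -> L r <= L y) ->
  \forall r \near +oo, L r / L (r ^+ 2) <= 1.
Proof.
move=> L_gt0 L_mono; near=> r.
have r_ge1 : 1 <= r by near: r; apply: nbhs_pinfty_ge.
have Lr_gt0 : 0 < L r by near: r.
have L_mono_r : forall y, r <= y -> L r <= L y by near: r.
have Lr_Lr2 : L r <= L (r ^+ 2) by rewrite L_mono_r // expr2 ler_peMl // ltW.
by rewrite ler_pdivrMr ?mul1r // (lt_le_trans Lr_gt0).
Unshelve. all: by end_near.
Qed.

Lemma ratio_sqr_eventually_le {R : realType} {L : R -> R} {zeta rho : R} :
  zeta < rho -> (\forall r \near +oo, 0 < L r) ->
  (fun r => L r / L (r ^+ 2)) @ +oo --> zeta ->
  \forall q \near +oo, L q <= rho * L (q ^+ 2).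
Proof.
move=> zeta_rho [M [_ L_gt0_M]] ratio_cvg.
have gap_gt0 : 0 < rho - zeta by rewrite subr_gt0.
have close := (cvgrPdist_lt _ _).1 ratio_cvg _ gap_gt0.
near=> q.
have q_ge1 : 1 <= q by near: q; apply: nbhs_pinfty_ge.
have Mq : M < q by near: q; apply: nbhs_pinfty_gt; exact: num_real.
have Lq2_gt0 : 0 < L (q ^+ 2).
  by apply: L_gt0_M; apply: lt_le_trans Mq _; rewrite expr2 ler_peMl // ltW.
have /ltr_normlP[close_q _] : `|zeta - L q / L (q ^+ 2)| < rho - zeta.
  by near: q; exact: close.
by rewrite -ler_pdivrMr //; lra.
Unshelve. all: by end_near.
Qed.

(* Squeezing: if r < s r <= r^2 eventually and L r / L (r^2) tends to 1,
   then L r / L (s r) lies between L r / L (r^2) and 1, so its limit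
   inferior alpha_phi_s is 1. *)
Lemma alpha_phi_s_eq1 (R : realType) (phi s : R -> R) :
  (\forall r \near +oo, 0 < ln (phi r)) ->
  (\forall r \near +oo, forall y, r <= y -> ln (phi r) <= ln (phi y)) ->
  (\forall r \near +oo, r < s r <= r ^+ 2) ->
  (fun r => ln (phi r) / ln (phi (r ^+ 2))) @ +oo --> (1 : R) ->
  alpha_phi_s phi s = 1%:E.
Proof.
move=> L_gt0 L_mono s_bounds ratio_cvg.
have [M [_ L_mono_M]] := L_mono.
have ratio_bounds : \forall r \near +oo,
    ln (phi r) / ln (phi (r ^+ 2)) <= ln (phi r) / ln (phi (s r)) <= 1.
  near=> r.
  have /andP[/ltW r_s s_r2] : r < s r <= r ^+ 2 by near: r.
  have Lr_gt0 : 0 < ln (phi r) by near: r.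
  have Mr : M < r by near: r; apply: nbhs_pinfty_gt; exact: num_real.
  have Ls_gt0 : 0 < ln (phi (s r)) := lt_le_trans Lr_gt0 (L_mono_M r Mr _ r_s).
  have Ls_L2 : ln (phi (s r)) <= ln (phi (r ^+ 2)).
    exact: L_mono_M (lt_le_trans Mr r_s) _ s_r2.
  rewrite ler_pM2l // lef_pV2 ?posrE ?(lt_le_trans Ls_gt0 Ls_L2) //=.
  by rewrite Ls_L2 ler_pdivrMr // mul1r (L_mono_M r Mr _ r_s).
apply/eqP; rewrite eq_le; apply/andP; split.
  apply: limf_einf_le; apply: filterS ratio_bounds => r /andP[_].
  by rewrite lee_fin.
apply/lee_addgt0Pr => d d_gt0; rewrite -leeBlDr // -EFinB.
have ratio_close := (cvgrPdist_lt _ _).1 ratio_cvg d d_gt0.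
apply: limf_einf_ge; near=> r; rewrite lee_fin.
have /andP[ratio_le _] :
  ln (phi r) / ln (phi (r ^+ 2)) <= ln (phi r) / ln (phi (s r)) <= 1 by near: r.
have /ltr_normlP[_ close] : `|1 - ln (phi r) / ln (phi (r ^+ 2))| < d.
  by near: r; exact: ratio_close.
lra.
Unshelve. all: by end_near.
Qed.

Theorem lemma3p4 (R : realType) (R0 : R) (phi s : R -> R) :
  0 < R0 ->
  (* phi : (R0,oo) -> (0,oo), non-decreasing, unbounded, log r <= phi r <= r *)
  (forall r, R0 < r -> 0 < phi r) ->
  (forall x y, R0 < x -> x <= y -> phi x <= phi y) ->
  (forall M, exists r, R0 < r /\ M < phi r) ->
  (forall r, R0 < r -> ln r <= phi r /\ phi r <= r) ->
  (* s : (R0,oo) -> (0,oo), non-decreasing, r < s r <= r^2, liminf s(r)/r > 1 *)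
  (forall r, R0 < r -> 0 < s r) ->
  (forall x y, R0 < x -> x <= y -> s x <= s y) ->
  (forall r, R0 < r -> r < s r /\ s r <= r ^+ 2) ->
  (1%:E < limf_einf (fun r : R => (s r / r)%:E) +oo%R)%E ->
  (* hypotheses of the lemma *)
  (0%:E < beta_phi phi)%E ->
  (exists zeta : R,
     (fun r : R => ln (phi r) / ln (phi (r ^+ 2))) @ +oo%R --> zeta) ->
  alpha_phi_s phi s = 1%:E.
Proof.
move=> _ phi_gt0 phi_mono phi_unbounded _ _ _ s_bounds _ beta_gt0 [zeta ratio_cvg].
have L_mono : \forall x \near +oo, forall y, x <= y -> ln (phi x) <= ln (phi y).
  exists R0; split => [|x R0x y xy]; first exact: num_real.
  by rewrite ler_ln ?posrE ?phi_gt0 ?phi_mono //; apply: lt_le_trans xy.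
have L_big M : \forall x \near +oo, M < ln (phi x).
  have [r [R0r Mr]] := phi_unbounded (expR M).
  exists r; split => [|x rx]; first exact: num_real.
  rewrite -ltr_expR lnK ?posrE ?phi_gt0 //; last exact: lt_trans R0r rx.
  exact: lt_le_trans Mr (phi_mono _ _ R0r (ltW rx)).
have L_gt0 := L_big 0.
have zeta_le1 : zeta <= 1.
  rewrite -(cvg_lim _ ratio_cvg) //; apply: limr_le; last exact: ratio_sqr_le1.
  by apply/cvg_ex; exists zeta.
have [zeta_lt1|zeta_eq1] : zeta < 1 \/ zeta = 1.
  by move: zeta_le1; rewrite le_eqVlt => /orP[/eqP|]; [right|left].
- have zeta_rho : zeta < (1 + zeta) / 2 by lra.
  have rho_lt1 : (1 + zeta) / 2 < 1 by lra.
  have L_sqr := ratio_sqr_eventually_le zeta_rho L_gt0 ratio_cvg.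
  have := beta_phi_le0 L_gt0 (loglog_negligible rho_lt1 L_mono L_big L_sqr).
  by rewrite leNgt beta_gt0.
- apply: alpha_phi_s_eq1 L_gt0 L_mono _ _; last by rewrite -zeta_eq1.
  by exists R0; split => [|r R0r]; [exact: num_real | apply/andP; apply: s_bounds].
Qed.
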